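(* Let $\mathcal H$ be a separable complex Hilbert space, $A\in L(\mathcal H)^+$, and let $T\in L(\mathcal H)$ satisfy $AT^2=AT$. The following are equivalent: (1) $AT=T^*A$; (2) $R(I-T)\subseteq R(AT)^\perp$; (3) $T^*AT\le A$.
   Context: $L(\mathcal H)^+$ denotes positive (semidefinite) bounded operators on $\mathcal H$; $R(\cdot)$ denotes range; $\le$ is the usual order of selfadjoint operators. *)

From HB Require Import structures.
From mathcomp Require Import all_boot all_order all_algebra.
From mathcomp Require Import reals.
From mathcomp Require Import complex.
Set Implicit Arguments. Unset Strict Implicit. Unset Printing Implicit Defensive.
Import Order.TTheory GRing.Theory Num.Theory.
Local Open Scope ring_scope.

Section Hilbert.
Variables (R : realType) (V : lmodType R[i]) (ip : V -> V -> R[i]).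

Definition is_inner_product : Prop :=
  [/\ forall a x y z, ip (a *: x + y) z = a * ip x z + ip y z,
      forall x y, ip y x = (ip x y)^*,
      forall x, 0 <= ip x x
    & forall x, ip x x = 0 -> x = 0].

Definition ipnorm (x : V) : R := Num.sqrt (complex.Re (ip x x)).

Definition ip_cauchy (u : nat -> V) : Prop :=
  forall e : R, 0 < e -> exists N : nat,
    forall m n, (N <= m)%N -> (N <= n)%N -> ipnorm (u m - u n) < e.

Definition ip_converges (u : nat -> V) (l : V) : Prop :=
  forall e : R, 0 < e -> exists N : nat,
    forall n, (N <= n)%N -> ipnorm (u n - l) < e.

Definition ip_complete : Prop :=
  forall u, ip_cauchy u -> exists l, ip_converges u l.

Definition ip_separable : Prop :=
  exists d : nat -> V, forall x (e : R), 0 < e -> exists n, ipnorm (x - d n) < e.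

Definition separable_hilbert : Prop :=
  [/\ is_inner_product, ip_complete & ip_separable].

Definition bounded_op (T : V -> V) : Prop :=
  exists M : R, forall x, ipnorm (T x) <= M * ipnorm x.

Definition is_adjoint (T Ts : V -> V) : Prop :=
  forall x y, ip (T x) y = ip x (Ts y).

Definition positive_op (A : V -> V) : Prop :=
  forall x, 0 <= ip (A x) x.

Definition op_le (B A : V -> V) : Prop :=
  forall x, 0 <= ip (A x - B x) x.

Definition op_range (T : V -> V) : V -> Prop := fun y => exists x, y = T x.

Definition orth (S : V -> Prop) : V -> Prop :=
  fun y => forall z, S z -> ip z y = 0.

End Hilbert.

From HB Require Import structures.
From mathcomp Require Import all_boot all_order all_algebra.
From mathcomp Require Import reals.
From mathcomp Require Import complex.
From mathcomp Require Import ring.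
Set Implicit Arguments. Unset Strict Implicit. Unset Printing Implicit Defensive.
Import Order.TTheory GRing.Theory Num.Theory.
Local Open Scope ring_scope.

(* A positive operator is selfadjoint, and each of the three conditions is
   equivalent to [T^* A T = A T]. For (1) this is selfadjointness of
   [T^* A T]; for (2) it is the identity
   [<A T w, x - T x> = <(A T - T^* A T) w, x>]. Since [A T^2 = A T], the
   quadratic form of [A - T^* A T] vanishes on [R(T)]; when this operator is
   positive it therefore annihilates [R(T)], which is [T^* A T = A T].
   Conversely, [T^* A T = A T = T^* A] makes [A - T^* A T] equal to
   [(I - T)^* A (I - T) >= 0]. *)

Section ComplexAlgebra.
Variable C : numClosedFieldType.

Lemma conj_eq_of_real_sums (a b : C) :
  (a + b)^* = a + b -> ('i * (b - a))^* = 'i * (b - a) -> a = b^*.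
Proof.
rewrite rmorphD rmorphM rmorphB /= conjCi => sum_real diff_real.
have diff_conj : a^* - b^* = b - a.
  by apply: (mulfI (neq0Ci C)); rewrite -diff_real; ring.
have two_neq0 : (2 : C) != 0 by rewrite pnatr_eq0.
have -> : a = ((a^* + b^*)^* + (a^* - b^*)^*) / 2.
  by rewrite rmorphD rmorphB /= !conjCK; field.
by rewrite sum_real diff_conj rmorphD rmorphB /=; field.
Qed.

(* At [s = - c / (d + 1)] the quadratic equals [- |c|^2 (d + 2) / (d + 1)^2]. *)
Lemma ge0_quadratic_linear_coef_eq0 (c d : C) : 0 <= d ->
  (forall s, 0 <= s^* * c + s * c^* + s * s^* * d) -> c = 0.
Proof.
move=> d_ge0 q_ge0.
have d1_gt0 : 0 < d + 1 by rewrite ltr_wpDl.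
have d1_neq0 : d + 1 != 0 by rewrite gt_eqF.
have d_real : d^* = d by apply/conj_Creal/ger0_real.
have := q_ge0 (- (c / (d + 1))).
have -> : (- (c / (d + 1)))^* * c + - (c / (d + 1)) * c^*
          + - (c / (d + 1)) * (- (c / (d + 1)))^* * d
        = - (c * c^* * ((d + 2) / ((d + 1) * (d + 1)))).
  by rewrite rmorphN rmorphM fmorphV rmorphD rmorph1 /= d_real; field.
have coef_gt0 : 0 < (d + 2) / ((d + 1) * (d + 1)).
  by rewrite divr_gt0 ?mulr_gt0 ?ltr_wpDl ?ltr0n.
rewrite oppr_ge0 pmulr_lle0 // => norm_le0.
have : c * c^* == 0 by rewrite eq_le norm_le0 mul_conjC_ge0.
by rewrite mul_conjC_eq0 => /eqP.
Qed.

End ComplexAlgebra.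

Section InnerProduct.
Variables (C : numClosedFieldType) (V : lmodType C) (ip : V -> V -> C).
Hypothesis ipL : forall a x y z, ip (a *: x + y) z = a * ip x z + ip y z.
Hypothesis ipC : forall x y, ip y x = (ip x y)^*.
Hypothesis ip_eq0 : forall x, ip x x = 0 -> x = 0.

Lemma ip0l z : ip 0 z = 0.
Proof.
have twice := ipL 1 0 0 z; rewrite scaler0 addr0 mul1r in twice.
by apply: (addIr (ip 0 z)); rewrite add0r -twice.
Qed.

Lemma ipDl x y z : ip (x + y) z = ip x z + ip y z.
Proof. by rewrite -[x in LHS]scale1r ipL mul1r. Qed.

Lemma ipZl a x z : ip (a *: x) z = a * ip x z.
Proof. by rewrite -[a *: x]addr0 ipL ip0l addr0. Qed.

Lemma ipBl x y z : ip (x - y) z = ip x z - ip y z.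
Proof. by rewrite -scaleN1r addrC ipL mulN1r addrC. Qed.

Lemma ipDr x y z : ip z (x + y) = ip z x + ip z y.
Proof. by rewrite ipC ipDl rmorphD /= -!ipC. Qed.

Lemma ipZr a x z : ip z (a *: x) = a^* * ip z x.
Proof. by rewrite ipC ipZl rmorphM /= -ipC. Qed.

Lemma ipBr x y z : ip z (x - y) = ip z x - ip z y.
Proof. by rewrite ipC ipBl rmorphB /= -!ipC. Qed.

Lemma ip_lext x y : (forall z, ip x z = ip y z) -> x = y.
Proof. by move=> h; apply/subr0_eq/ip_eq0; rewrite ipBl h subrr. Qed.

Section PositiveOperator.
Variable B : {linear V -> V}.
Hypothesis B_ge0 : forall x, 0 <= ip (B x) x.

Let quad_add v w :
  ip (B (v + w)) (v + w) = ip (B v) v + ip (B w) w + (ip (B v) w + ip (B w) v).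
Proof. by rewrite linearD !ipDl !ipDr; ring. Qed.

Let cross_real v w :
  (ip (B v) w + ip (B w) v)^* = ip (B v) w + ip (B w) v.
Proof.
have B_real u : (ip (B u) u)^* = ip (B u) u by apply/conj_Creal/ger0_real.
by have := B_real (v + w); rewrite quad_add rmorphD [X in X + _]rmorphD /= !B_real => /addrI.
Qed.

Lemma pos_selfadjoint x y : ip (B x) y = ip x (B y).
Proof.
rewrite (ipC (B y) x); apply: conj_eq_of_real_sums; first exact: cross_real.
have := cross_real x ('i *: y); rewrite linearZ ipZl ipZr conjCi.
by have -> : - 'i * ip (B x) y + 'i * ip (B y) x = 'i * (ip (B y) x - ip (B x) y) by ring.
Qed.

Lemma pos_quad_eq0 w : ip (B w) w = 0 -> B w = 0.
Proof.
move=> qw0; apply: ip_lext => v; rewrite ip0l.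
apply: (ge0_quadratic_linear_coef_eq0 (B_ge0 v)) => s.
have := B_ge0 (w + s *: v).
rewrite quad_add qw0 linearZ !ipZl !ipZr (pos_selfadjoint v w) (ipC (B w) v) => q_ge0.
by apply: (le_trans q_ge0); rewrite le_eqVlt; apply/orP; left; apply/eqP; ring.
Qed.

End PositiveOperator.

Section Idempotent.
Variables (A T Ts : {linear V -> V}).
Hypothesis A_ge0 : forall x, 0 <= ip (A x) x.
Hypothesis adjT : forall x y, ip (T x) y = ip x (Ts y).
Hypothesis ATT : forall x, A (T (T x)) = A (T x).

Let A_selfadjoint := pos_selfadjoint A_ge0.

Lemma adjTs x y : ip (Ts y) x = ip y (T x).
Proof. by rewrite ipC -adjT -ipC. Qed.

Lemma ip_subT u x : ip u (x - T x) = ip (u - Ts u) x.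
Proof. by rewrite ipBr ipBl adjTs. Qed.

Lemma commute_adj_iff_fixed :
  (forall x, A (T x) = Ts (A x)) <-> (forall x, Ts (A (T x)) = A (T x)).
Proof.
split=> [comm x | fixed x]; first by rewrite -comm ATT.
apply: ip_lext => y.
by rewrite -fixed adjTs A_selfadjoint adjT fixed -A_selfadjoint -adjTs.
Qed.

Lemma orth_range_iff_fixed :
  (forall w x, ip (A (T w)) (x - T x) = 0) <-> (forall x, Ts (A (T x)) = A (T x)).
Proof.
split=> [orth w | fixed w x]; last by rewrite ip_subT fixed subrr ip0l.
apply/esym/subr0_eq/ip_lext => x; rewrite ip0l -ip_subT; exact: orth.
Qed.

Lemma op_le_iff_fixed :
  (forall x, 0 <= ip (A x - Ts (A (T x))) x) <-> (forall x, Ts (A (T x)) = A (T x)).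
Proof.
split=> [le_A z | fixed x].
  pose B : {linear V -> V} := A \- (Ts \o A \o T).
  have B_ge0 x : 0 <= ip (B x) x by exact: le_A.
  have BT0 : ip (B (T z)) (T z) = 0.
    rewrite /= ipBl adjTs ATT [X in _ - X]A_selfadjoint ATT.
    by rewrite A_selfadjoint subrr.
  by have /= := pos_quad_eq0 B_ge0 BT0; rewrite ATT => /subr0_eq /esym.
have comm := (proj2 commute_adj_iff_fixed) fixed.
have -> : ip (A x - Ts (A (T x))) x = ip (A (x - T x)) (x - T x).
  by rewrite linearB /= !ipBl !ipBr -!adjTs -(comm x) !fixed; ring.
exact: A_ge0.
Qed.

End Idempotent.
End InnerProduct.

Lemma orth_rangeP (R : realType) (V : lmodType R[i]) (ip : V -> V -> R[i])
    (S U : V -> V) :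
  (forall y, op_range U y -> orth ip (op_range S) y) <->
  (forall w x, ip (S w) (U x) = 0).
Proof.
split=> [orthSU w x | orthSU _ [x ->] _ [w ->]]; last exact: orthSU.
by apply: orthSU; [exists x | exists w].
Qed.

Theorem mainTheorem4 (R : realType) (V : lmodType R[i]) (ip : V -> V -> R[i])
    (A T Ts : {linear V -> V}) :
  separable_hilbert ip ->
  bounded_op ip A -> positive_op ip A ->
  bounded_op ip T -> bounded_op ip Ts -> is_adjoint ip T Ts ->
  (forall x, A (T (T x)) = A (T x)) ->
  [/\ ((forall x, A (T x) = Ts (A x)) <->
        (forall y, op_range (fun x => x - T x) y ->
                   orth ip (op_range (fun x => A (T x))) y)),
      ((forall y, op_range (fun x => x - T x) y ->
                  orth ip (op_range (fun x => A (T x))) y) <->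
        op_le ip (fun x => Ts (A (T x))) A)
    & (op_le ip (fun x => Ts (A (T x))) A <-> (forall x, A (T x) = Ts (A x)))].
Proof.
move=> [[ipL ipC _ ip_eq0] _ _] _ A_ge0 _ _ adjT ATT.
have comm_fixed := commute_adj_iff_fixed ipL ipC ip_eq0 A_ge0 adjT ATT.
have orth_fixed := orth_range_iff_fixed ipL ipC ip_eq0 A adjT.
have le_fixed := op_le_iff_fixed ipL ipC ip_eq0 A_ge0 adjT ATT.
have orth_eq := orth_rangeP ip (fun x => A (T x)) (fun x => x - T x).
rewrite /op_le; split; tauto.
Qed.
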